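(* Let $R$ be an amenable affine algebra over a field $K$ with no zero divisors. Then there exist a basis $\{e_i\}_{i\ge1}$ of $R$ over $K$ and a finitely additive invariant dimension-measure on $R$ with respect to $\{e_i\}_{i\ge1}$.
   Context: An affine algebra is a finitely generated associative algebra over $K$, not necessarily unital. $R$ is amenable if there exist finite-dimensional $K$-subspaces $W_1\subseteq W_2\subseteq\cdots$ with $\bigcup_nW_n=R$ such that for every $r\in R$, $\lim_{n\to\infty}\dim_K(W_nr+W_n)/\dim_K(W_n)=1$. For $A\subseteq R$, $r\in R$, $Ar=\{ar:a\in A\}$. Subsets $B_1,\dots,B_k$ of $R$ are mutually independent if they are pairwise disjoint and their union is linearly independent over $K$. Given a basis $\{e_i\}_{i\ge1}$ of $R$, a linearly independent subset $L\subseteq R$ is regular if there are subsets $A_1,\dots,A_n$ of $\{e_i\}$ and $r_1,\dots,r_n\in R$ with $L$ the disjoint union of $A_1r_1,\dots,A_nr_n$. A finitely additive invariant dimension-measure with respect to $\{e_i\}$ is a nonnegative function $\mu$ on regular subsets with: (i) $\mu(\{e_i\}_{i\ge1})=1$ and $\mu(A)\le1$ for all regular $A$; (ii) $\mu(A\cup B)=\mu(A)+\mu(B)$ for mutually independent regular $A,B$; (iii) $\mu(Ar)=\mu(A)$ for regular $A$ and nonzero $r\in R$. *)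

(* Non-unital associative K-algebras are given as an
   lmodType K together with an explicit bilinear associative product. *)
From mathcomp Require Import all_boot all_order all_algebra.
From mathcomp Require Import Rstruct.
Set Implicit Arguments. Unset Strict Implicit. Unset Printing Implicit Defensive.
Import Order.TTheory GRing.Theory Num.Theory.
Local Open Scope ring_scope.

Section AlgDefs.
Variables (K : fieldType) (V : lmodType K).

Definition lin_indep (A : V -> Prop) : Prop :=
  forall (l : seq V) (c : V -> K),
    uniq l -> (forall x, x \in l -> A x) ->
    \sum_(x <- l) c x *: x = 0 -> forall x, x \in l -> c x = 0.

Definition in_span (A : V -> Prop) (v : V) : Prop :=
  exists (l : seq V) (c : V -> K),
    (forall x, x \in l -> A x) /\ v = \sum_(x <- l) c x *: x.

Definition is_basis (A : V -> Prop) : Prop :=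
  lin_indep A /\ forall v, in_span A v.

Definition has_dim (S : V -> Prop) (d : nat) : Prop :=
  exists l : seq V, [/\ uniq l, size l = d, lin_indep (fun x => x \in l) &
    forall v, S v <-> in_span (fun x => x \in l) v].

Variable mul : V -> V -> V.

Definition is_assoc_alg_mul : Prop :=
  [/\ forall a b c, mul a (mul b c) = mul (mul a b) c,
      forall a b c, mul (a + b) c = mul a c + mul b c,
      forall a b c, mul a (b + c) = mul a b + mul a c,
      forall (k : K) a b, mul (k *: a) b = k *: mul a b &
      forall (k : K) a b, mul a (k *: b) = k *: mul a b].

Definition affine_alg : Prop :=
  exists s : seq V, forall S : V -> Prop,
    (forall x, x \in s -> S x) -> S 0 ->
    (forall x y, S x -> S y -> S (x + y)) ->
    (forall (k : K) x, S x -> S (k *: x)) ->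
    (forall x y, S x -> S y -> S (mul x y)) ->
    forall v, S v.

Definition no_zero_divisors : Prop :=
  (exists v : V, v != 0) /\ forall a b, mul a b = 0 -> a = 0 \/ b = 0.

Definition transl_sum (W : V -> Prop) (r : V) : V -> Prop :=
  fun v => exists a b, [/\ W a, W b & v = mul a r + b].

Definition amenable : Prop :=
  exists W : nat -> V -> Prop,
    [/\ forall n v, W n v -> W n.+1 v,
        forall v, exists n, W n v &
        forall r, exists d e : nat -> nat,
          [/\ forall n, has_dim (W n) (d n),
              forall n, has_dim (transl_sum (W n) r) (e n) &
              forall eps : rat, 0 < eps -> exists N, forall n, (N <= n)%N ->
                `|(e n)%:R / (d n)%:R - 1| < eps]].

Definition rmul_set (A : V -> Prop) (r : V) : V -> Prop :=
  fun v => exists a, A a /\ v = mul a r.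

Definition set_union (A B : V -> Prop) : V -> Prop := fun v => A v \/ B v.

Definition regular (E : V -> Prop) (L : V -> Prop) : Prop :=
  lin_indep L /\
  exists (n : nat) (A : 'I_n -> V -> Prop) (r : 'I_n -> V),
    [/\ forall j v, A j v -> E v,
        forall v, L v <-> exists j, rmul_set (A j) (r j) v &
        forall j k, j != k -> forall v,
          ~ (rmul_set (A j) (r j) v /\ rmul_set (A k) (r k) v)].

Definition mutually_indep (A B : V -> Prop) : Prop :=
  (forall v, ~ (A v /\ B v)) /\ lin_indep (set_union A B).

(* Finitely additive invariant dimension-measure w.r.t. the basis E,
   real valued; only its values on regular subsets matter. *)
Definition dim_measure (E : V -> Prop) (mu : (V -> Prop) -> Rdefinitions.R) : Prop :=
  [/\ mu E = 1,
      forall A, regular E A -> 0 <= mu A /\ mu A <= 1,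
      forall A B, regular E A -> regular E B -> mutually_indep A B ->
        mu (set_union A B) = mu A + mu B &
      forall A r, regular E A -> r != 0 -> mu (rmul_set A r) = mu A].

End AlgDefs.

From mathcomp Require Import all_boot all_order all_algebra.
From mathcomp Require Import all_classical all_reals all_analysis.
From mathcomp Require Import Rstruct Rstruct_topology.
From mathcomp Require Import lra zify.
Set Implicit Arguments. Unset Strict Implicit. Unset Printing Implicit Defensive.
Import Order.TTheory GRing.Theory Num.Theory.
Import numFieldNormedType.Exports.
Local Open Scope ring_scope.
Local Open Scope classical_set_scope.

(* Let W_0 <= W_1 <= ... be the Folner exhaustion. The basis is an increasing union of
   finite bases E_0 <= E_1 <= ... of subspaces W_(n_0) <= W_(n_1) <= ..., where E_k is
   chosen so that every element t of the bases of W_0, ..., W_k moves at most |E_k|/(k+1)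
   elements x of E_k out of W_(n_k) (that is, x t is not in W_(n_k)). Such a choice exists:
   inside W_n, the w with w t in W_n for all t in a finite set T form a subspace whose
   codimension is at most the sum over T of dim (W_n t + W_n) - dim W_n, which amenability
   makes an arbitrarily small fraction of dim W_n; a basis of this subspace extending E_(k-1)
   is then completed to a basis of W_n.
   For linearly independent L, let c_k(L) be the number of elements of L in W_(n_k), and
   define the measure of L as an ultrafilter limit of c_k(L) / |E_k|. Additivity comes from
   additivity of counting. For invariance, when A is contained in the basis and s != 0,
   right multiplication by s is injective (no zero divisors), so c_k(A s) and c_k(A) differ
   by at most the number of x in E_k with x s outside W_(n_k); as s is a combination of
   finitely many t, this is O(|E_k| / k). A regular set is a finite disjoint union of such
   translates. *)

Section SeqSpan.
Variables (K : fieldType) (V : lmodType K).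
Implicit Types (s t : seq V) (v : V) (P : V -> Prop).

Definition seq_span s v := exists a : nat -> K, v = \sum_(0 <= i < size s) a i *: s`_i.

Definition seq_free s := forall a : nat -> K,
  \sum_(0 <= i < size s) a i *: s`_i = 0 -> forall i, (i < size s)%N -> a i = 0.

Definition is_subspace P :=
  [/\ P 0, forall x y, P x -> P y -> P (x + y) & forall k x, P x -> P (k *: x)].

Lemma is_subspace_sum P I r (Q : pred I) (F : I -> V) : is_subspace P ->
  (forall i, Q i -> P (F i)) -> P (\sum_(i <- r | Q i) F i).
Proof. by case=> P0 PD _ PF; apply: big_ind. Qed.

Lemma sum_nth_delta s j : (j < size s)%N ->
  \sum_(0 <= i < size s) (i == j)%:R *: s`_i = s`_j.
Proof.
move=> hj; rewrite big_mkord (bigD1 (Ordinal hj)) //= eqxx scale1r big1 ?addr0 //.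
by move=> i; rewrite -val_eqE /= => /negbTE ->; rewrite scale0r.
Qed.

Lemma is_subspace_seq_span s : is_subspace (seq_span s).
Proof.
split.
- by exists (fun=> 0); rewrite big1 // => i _; rewrite scale0r.
- move=> _ _ [a ->] [b ->]; exists (fun i => a i + b i).
  by rewrite -big_split; apply: eq_bigr => i _; rewrite scalerDl.
- move=> k _ [a ->]; exists (fun i => k * a i).
  by rewrite scaler_sumr; apply: eq_bigr => i _; rewrite scalerA.
Qed.

Lemma is_subspace_span_eq P s : (forall v, P v <-> seq_span s v) -> is_subspace P.
Proof.
move=> Ps; have [S0 SD SZ] := is_subspace_seq_span s.
by split=> [|x y /Ps Px /Ps Py|k x /Ps Px]; apply/Ps; auto.
Qed.

Lemma seq_span_mem s x : x \in s -> seq_span s x.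
Proof.
move=> xs; exists (fun i => (i == index x s)%:R).
by rewrite sum_nth_delta ?index_mem // nth_index.
Qed.

Lemma seq_span_min P s v : is_subspace P ->
  (forall x, x \in s -> P x) -> seq_span s v -> P v.
Proof.
move=> sP sPs [a ->]; rewrite big_mkord; apply: is_subspace_sum => // i _.
by case: sP => _ _ PZ; apply/PZ/sPs/mem_nth.
Qed.

Lemma in_span_seq_span s v : in_span (fun x => x \in s) v -> seq_span s v.
Proof.
move=> [l [c [ls ->]]]; rewrite big_seq; apply: is_subspace_sum => [|x xl].
  exact: is_subspace_seq_span.
by case: (is_subspace_seq_span s) => _ _ PZ; apply/PZ/seq_span_mem/ls.
Qed.

Lemma seq_span_in_span s v : uniq s -> seq_span s v -> in_span (fun x => x \in s) v.
Proof.
move=> us [a ->]; exists s, (fun x => a (index x s)); split => //.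
by rewrite [RHS](big_nth 0); apply: eq_big_nat => i /andP[_ hi]; rewrite index_uniq.
Qed.

Lemma lin_indep_sub P P' : (forall x, P x -> P' x) -> lin_indep P' -> lin_indep P.
Proof. by move=> PP' hP' l c ul hl; apply: hP' => // x /hl /PP'. Qed.

Lemma lin_indep_neq0 P : lin_indep P -> ~ P 0.
Proof.
move=> hP P0; have /eqP : (1 : K) = 0.
  apply: (hP [:: 0] (fun=> 1)) (mem_head _ _) => //; last by rewrite big_seq1 scaler0.
  by move=> y; rewrite inE => /eqP->.
by rewrite oner_eq0.
Qed.

Lemma lin_indep_seq_free s : uniq s -> lin_indep (fun x => x \in s) -> seq_free s.
Proof.
move=> us hs a a0 i hi.
have hc : \sum_(x <- s) a (index x s) *: x = 0.
  by rewrite -[RHS]a0 (big_nth 0); apply: eq_big_nat => j /andP[_ hj]; rewrite index_uniq.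
by have := hs s _ us (fun x h => h) hc _ (mem_nth 0 hi); rewrite index_uniq.
Qed.

Lemma seq_free_uniq s : seq_free s -> uniq s.
Proof.
move=> hs; apply/(uniqP 0) => i j hi hj sij; apply/eqP/negPn/negP => nij.
have : (i == i)%:R - (i == j)%:R = 0 :> K.
  apply: (hs (fun k => (k == i)%:R - (k == j)%:R)) => //.
  rewrite (eq_bigr (fun k => (k == i)%:R *: s`_k - (k == j)%:R *: s`_k)).
    by rewrite sumrB !sum_nth_delta // sij subrr.
  by move=> k _; rewrite scalerBl.
by rewrite eqxx (negbTE nij) subr0 => /eqP; rewrite oner_eq0.
Qed.

Lemma seq_free_lin_indep s : seq_free s -> lin_indep (fun x => x \in s).
Proof.
move=> hs l c ul ls c0 x xl.
pose a i := if s`_i \in l then c s`_i else 0.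
have a0 : \sum_(0 <= i < size s) a i *: s`_i = 0.
  rewrite -[RHS]c0 (eq_bigr (fun i => if s`_i \in l then c s`_i *: s`_i else 0)).
    rewrite -(big_nth 0 predT (fun y => if y \in l then c y *: y else 0)) -big_mkcond.
    rewrite -big_filter; apply/perm_big/uniq_perm => //.
      by rewrite filter_uniq // seq_free_uniq.
    by move=> y; rewrite mem_filter; case yl: (y \in l) => //=; rewrite ls.
  by move=> i _; rewrite /a; case: ifP; rewrite // scale0r.
have xs : x \in s by exact: ls.
by have := hs a a0 (index x s); rewrite index_mem /a nth_index // xl; apply.
Qed.

Lemma sum_nth_cat s1 s2 (a : nat -> K) :
  \sum_(0 <= i < size (s1 ++ s2)) a i *: (s1 ++ s2)`_i =
  \sum_(0 <= i < size s1) a i *: s1`_i + \sum_(0 <= j < size s2) a (j + size s1)%N *: s2`_j.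
Proof.
rewrite size_cat (big_cat_nat _ (leq_addr _ _)) //=; congr (_ + _).
  by apply: eq_big_nat => i /andP[_ hi]; rewrite nth_cat hi.
rewrite -{1}[size s1]add0n big_addn addKn; apply: eq_bigr => j _.
by rewrite nth_cat ltnNge leq_addl /= addnK.
Qed.

Lemma seq_free_cat_comb s1 s2 (a b : nat -> K) : seq_free (s1 ++ s2) ->
  \sum_(0 <= i < size s1) a i *: s1`_i = \sum_(0 <= j < size s2) b j *: s2`_j ->
  forall j, (j < size s2)%N -> b j = 0.
Proof.
move=> hs ab j hj.
pose c i := if (i < size s1)%N then a i else - b (i - size s1)%N.
have c0 : \sum_(0 <= i < size (s1 ++ s2)) c i *: (s1 ++ s2)`_i = 0.
  rewrite sum_nth_cat (eq_big_nat _ _ (F2 := fun i => a i *: s1`_i)); last first.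
    by move=> i /andP[_ hi]; rewrite /c hi.
  rewrite ab -big_split big1 // => i _ /=.
  by rewrite /c ltnNge leq_addl /= addnK scaleNr subrr.
have := hs c c0 (j + size s1)%N.
rewrite size_cat addnC ltn_add2l hj /c ltnNge leq_addr /= addKn => /(_ isT)/eqP.
by rewrite oppr_eq0 => /eqP.
Qed.

Lemma seq_free_cat_span s1 s2 x : seq_free (s1 ++ s2) -> x \in s2 -> ~ seq_span s1 x.
Proof.
move=> hs xs2 [a ax]; have hx : (index x s2 < size s2)%N by rewrite index_mem.
suff : (index x s2 == index x s2)%:R = 0 :> K by rewrite eqxx => /eqP; rewrite oner_eq0.
apply: (seq_free_cat_comb (a := a) (b := fun j => (j == index x s2)%:R) hs _ hx).
by rewrite sum_nth_delta // nth_index.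
Qed.

Lemma seq_free_rcons s x : seq_free s -> ~ seq_span s x -> seq_free (rcons s x).
Proof.
move=> hs xs a a0.
rewrite -cats1 sum_nth_cat /= big_nat1 add0n in a0.
have ax0 : a (size s) = 0.
  apply/eqP/negPn/negP => ax; apply: xs.
  exists (fun i => - (a (size s))^-1 * a i).
  rewrite (eq_bigr (fun i => - (a (size s))^-1 *: (a i *: s`_i))); last first.
    by move=> i _; rewrite scalerA.
  rewrite -scaler_sumr; have -> : \sum_(0 <= i < size s) a i *: s`_i = - (a (size s) *: x).
    by apply/eqP; rewrite -addr_eq0 a0.
  by rewrite scalerN scaleNr opprK scalerA mulVf // scale1r.
rewrite ax0 scale0r addr0 in a0.
by move=> i; rewrite size_rcons ltnS leq_eqVlt => /orP[/eqP->|/(hs a a0)].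
Qed.

Lemma size_seq_free_le s t : seq_free s -> (forall x, x \in s -> seq_span t x) ->
  (size s <= size t)%N.
Proof.
move=> hs st.
have [B hB] : exists B : nat -> nat -> K, forall i, (i < size s)%N ->
    s`_i = \sum_(0 <= j < size t) B i j *: t`_j.
  have /choice[B hB] i : exists b : nat -> K, (i < size s)%N ->
      s`_i = \sum_(0 <= j < size t) b j *: t`_j.
    case: (boolP (i < size s)%N) => [hi|hi]; last by exists (fun=> 0).
    by have [b ->] := st _ (mem_nth 0 hi); exists b.
  by exists B.
pose M : 'M[K]_(size s, size t) := \matrix_(i, j) B i j.
suff /eqP <- : row_free M by exact: rank_leq_col.
rewrite -kermx_eq0; apply/eqP/row_matrixP => k; rewrite row0.
set u := row k (kermx M); have uM : u *m M = 0 by apply/sub_kermxP; rewrite row_sub.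
pose a n := if insub n is Some j then u 0 j else 0.
have aE (j : 'I_(size s)) : a j = u 0 j by rewrite /a valK.
apply/rowP => i; rewrite [RHS]mxE -aE; apply: hs (ltn_ord i).
rewrite big_mkord (eq_bigr (fun i => \sum_(j < size t) (u 0 i * M i j) *: t`_j)).
  rewrite exchange_big /= big1 // => j _; rewrite -scaler_suml.
  have : (u *m M) 0 j = 0 by rewrite uM mxE.
  by rewrite mxE => ->; rewrite scale0r.
move=> i0 _; rewrite aE hB // big_mkord scaler_sumr; apply: eq_bigr => j _.
by rewrite scalerA [M i0 j]mxE.
Qed.

Lemma seq_free_span_size s t : seq_free s -> seq_free t ->
  (forall v, seq_span s v <-> seq_span t v) -> size s = size t.
Proof.
move=> hs ht st; apply/eqP; rewrite eqn_leq !size_seq_free_le // => x xs.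
  exact/st/seq_span_mem.
exact/st/seq_span_mem.
Qed.

Lemma seq_free_extend P g s : is_subspace P -> (forall x, P x -> seq_span g x) ->
  seq_free s -> (forall x, x \in s -> P x) ->
  exists c, [/\ forall x, x \in c -> P x, seq_free (s ++ c) &
                forall x, P x -> seq_span (s ++ c) x].
Proof.
move=> sP Pg hs sPs.
pose ok m := `[< exists c, [/\ size c = m, forall x, x \in c -> P x & seq_free (s ++ c)] >].
have ok0 : exists m, ok m by exists 0%N; apply/asboolP; exists [::]; rewrite cats0.
have ok_le m : ok m -> (m <= size g)%N.
  move=> /asboolP [c [<- cP hsc]]; apply: leq_trans (size_seq_free_le hsc _).
    by rewrite size_cat leq_addl.
  by move=> x; rewrite mem_cat => /orP[/sPs|/cP]; exact: Pg.
case: (ex_maxnP ok0 ok_le) => m /asboolP [c [szc cP hsc]] cmax.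
exists c; split => // x Px; apply: contrapT => nsx.
have /cmax : ok (size (rcons c x)).
  apply/asboolP; exists (rcons c x); split => //; last by rewrite -rcons_cat; exact: seq_free_rcons.
  by move=> y; rewrite mem_rcons inE => /orP[/eqP->|/cP].
by rewrite size_rcons szc ltnn.
Qed.

End SeqSpan.

Section Product.
Variables (K : fieldType) (V : lmodType K) (mul : V -> V -> V).
Hypothesis hmul : is_assoc_alg_mul mul.

Lemma amulA a b c : mul a (mul b c) = mul (mul a b) c. Proof. by case: hmul. Qed.
Lemma amulDl a b c : mul (a + b) c = mul a c + mul b c. Proof. by case: hmul. Qed.
Lemma amulDr a b c : mul a (b + c) = mul a b + mul a c. Proof. by case: hmul. Qed.
Lemma amulZl k a b : mul (k *: a) b = k *: mul a b. Proof. by case: hmul. Qed.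
Lemma amulZr k a b : mul a (k *: b) = k *: mul a b. Proof. by case: hmul. Qed.

Lemma amul0l a : mul 0 a = 0.
Proof. by have := amulZl 0 0 a; rewrite !scale0r. Qed.

Lemma amul0r a : mul a 0 = 0.
Proof. by have := amulZr 0 a 0; rewrite !scale0r. Qed.

Lemma amulBl a b c : mul (a - b) c = mul a c - mul b c.
Proof. by rewrite amulDl -scaleN1r amulZl scaleN1r. Qed.

Lemma amul_suml I r (P : pred I) (F : I -> V) b :
  mul (\sum_(i <- r | P i) F i) b = \sum_(i <- r | P i) mul (F i) b.
Proof. exact: (big_morph _ (fun x y => amulDl x y b) (amul0l b)). Qed.

Lemma amul_sumr I r (P : pred I) (F : I -> V) a :
  mul a (\sum_(i <- r | P i) F i) = \sum_(i <- r | P i) mul a (F i).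
Proof. exact: (big_morph _ (amulDr a) (amul0r a)). Qed.

Definition rstab (G : V -> Prop) (T : seq V) (w : V) := G w /\ forall t, t \in T -> G (mul w t).

Lemma is_subspace_rstab G T : is_subspace G -> is_subspace (rstab G T).
Proof.
move=> [G0 GD GZ]; split.
- by split => // t _; rewrite amul0l.
- move=> x y [Gx xT] [Gy yT]; split => [|t tT]; first exact: GD.
  by rewrite amulDl; apply: GD; [exact: xT | exact: yT].
- by move=> k x [Gx xT]; split => [|t tT]; [exact: GZ | rewrite amulZl; apply/GZ/xT].
Qed.

Section Stabilizer.
Variables (G : V -> Prop) (g : seq V).
Hypotheses (g_free : seq_free g) (g_span : forall v, G v <-> seq_span g v).

Let G_subspace : is_subspace G := is_subspace_span_eq g_span.

(* Right multiplication by t embeds a complement of rstab G (t :: T) in rstab G T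
   into (G t + G) / G. *)
Lemma seq_free_cat_rmul t T b c : seq_free (b ++ c) -> (forall x, x \in c -> rstab G T x) ->
  (forall x, rstab G (t :: T) x -> seq_span b x) -> seq_free (g ++ map (mul^~ t) c).
Proof.
move=> hbc cT bT a a0; rewrite sum_nth_cat size_map in a0.
pose w := \sum_(0 <= j < size c) a (j + size g)%N *: c`_j.
have wtE : mul w t = \sum_(0 <= j < size c) a (j + size g)%N *: (map (mul^~ t) c)`_j.
  by rewrite amul_suml; apply: eq_big_nat => j /andP[_ hj]; rewrite amulZl (nth_map 0).
rewrite -wtE in a0.
have Gwt : G (mul w t).
  by case: G_subspace => _ _ GZ; rewrite -(addr0_eq a0) -scaleN1r; apply/GZ/g_span; exists a.
have [bw wE] : seq_span b w.
  apply: bT; have [Gw wT] : rstab G T w.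
    rewrite /w big_mkord; apply: is_subspace_sum => [|j _]; first exact: is_subspace_rstab.
    by case: (is_subspace_rstab T G_subspace) => _ _ SZ; apply/SZ/cT/mem_nth.
  by split => // u; rewrite inE => /orP[/eqP->|/wT].
have ac0 j : (j < size c)%N -> a (j + size g)%N = 0 by exact: seq_free_cat_comb hbc (esym wE) j.
have w0 : w = 0 by rewrite /w big_mkord big1 // => j _; rewrite ac0 ?scale0r.
rewrite w0 amul0l addr0 in a0.
move=> i; rewrite size_cat size_map => hi; case: (ltnP i (size g)) => [|hgi].
  exact: g_free a0 i.
by rewrite -(subnK hgi); apply: ac0; lia.
Qed.

Lemma rstab_basis_extend T (h : V -> seq V) :
  (forall t, t \in T -> forall v, transl_sum mul G t v -> seq_span (h t) v) ->
  forall b, seq_free b -> (forall x, x \in b -> rstab G T x) ->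
    (forall x, rstab G T x -> seq_span b x) ->
  exists c, [/\ forall x, x \in c -> G x, seq_free (b ++ c),
    forall x, G x -> seq_span (b ++ c) x &
    (size c <= \sum_(t <- T) (size (h t) - size g))%N].
Proof.
elim: T => [|t T IH] hT b hb bT Tb.
  by exists [::]; rewrite cats0; split => // x Gx; apply: Tb; split.
have bT' x : x \in b -> rstab G T x.
  by move=> /bT [Gx xT]; split => // u uT; apply: xT; rewrite inE uT orbT.
have [c1 [c1T hbc1 Tbc1]] :=
  seq_free_extend (is_subspace_rstab T G_subspace) (fun x Tx => (g_span x).1 Tx.1) hb bT'.
have bc1T x : x \in b ++ c1 -> rstab G T x by rewrite mem_cat => /orP[/bT'|/c1T].
have hT' u : u \in T -> forall v, transl_sum mul G u v -> seq_span (h u) v.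
  by move=> uT; apply: hT; rewrite inE uT orbT.
have [c2 [c2G hc2 Gc2 szc2]] := IH hT' _ hbc1 bc1T Tbc1.
exists (c1 ++ c2); rewrite catA; split => //.
  by move=> x; rewrite mem_cat => /orP[/c1T[]|/c2G].
rewrite big_cons size_cat.
suff : (size g + size c1 <= size (h t))%N by lia.
rewrite -(size_map (mul^~ t) c1) -size_cat.
apply: size_seq_free_le (seq_free_cat_rmul hbc1 c1T Tb) _ => x.
have G0 : G 0 by case: G_subspace.
rewrite mem_cat => /orP[xg|/mapP[y yc1 ->]]; apply: (hT t (mem_head _ _)).
  by exists 0, x; split => //; [exact/g_span/seq_span_mem | rewrite amul0l add0r].
by exists y, 0; split => //; [case: (c1T y yc1) | rewrite addr0].
Qed.

Lemma rstab_free_extend T (h : V -> seq V) :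
  (forall t, t \in T -> forall v, transl_sum mul G t v -> seq_span (h t) v) ->
  forall b, seq_free b -> (forall x, x \in b -> rstab G T x) ->
  exists c, [/\ forall x, x \in c -> G x, seq_free (b ++ c),
    forall x, G x -> seq_span (b ++ c) x &
    (count (fun x => ~~ `[< rstab G T x >]) (b ++ c) <= \sum_(t <- T) (size (h t) - size g))%N].
Proof.
move=> hT b hb bT.
have [c1 [c1T hbc1 Tbc1]] :=
  seq_free_extend (is_subspace_rstab T G_subspace) (fun x Tx => (g_span x).1 Tx.1) hb bT.
have bc1T x : x \in b ++ c1 -> rstab G T x by rewrite mem_cat => /orP[/bT|/c1T].
have [c2 [c2G hc2 Gc2 szc2]] := rstab_basis_extend hT hbc1 bc1T Tbc1.
exists (c1 ++ c2); rewrite catA; split => //.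
  by move=> x; rewrite mem_cat => /orP[/c1T[]|/c2G].
rewrite count_cat (eq_in_count (a2 := pred0)) ?count_pred0 ?add0n.
  exact: leq_trans (count_size _ _) szc2.
by move=> x /bc1T Tx; apply/negbF/asboolP.
Qed.

End Stabilizer.
End Product.

Lemma near_all_in (T : eqType) (s : seq T) (P : T -> nat -> Prop) :
  (forall y, y \in s -> \forall n \near \oo, P y n) ->
  \forall n \near \oo, forall y, y \in s -> P y n.
Proof.
elim: s => [|a s IH] h; first exact: filterE.
have IHs := IH (fun y ys => h y (mem_behead (s := a :: s) ys)).
apply: filterS (filterI (h a (mem_head _ _)) IHs) => n [Pa Ps] y.
by rewrite inE => /predU1P[->|/Ps].
Qed.

Lemma mul_sum_le_shares (T : eqType) (s : seq T) (f : T -> nat) m B :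
  (forall t, t \in s -> m * (size s).+1 * f t < B)%N -> (m * \sum_(t <- s) f t <= B)%N.
Proof.
move=> sf; rewrite -(@leq_pmul2l (size s).+1) // mulnA [(_ * m)%N]mulnC big_distrr /=.
apply: leq_trans (_ : \sum_(t <- s) B <= _)%N.
  by rewrite big_seq_cond [X in (_ <= X)%N]big_seq_cond; apply: leq_sum => t /andP[/sf /ltnW].
by rewrite big_const_seq count_predT iter_addn_0 mulnC leq_mul2r leqnSn orbT.
Qed.

Lemma count_le_sum (T : eqType) (s ts : seq T) (p : pred T) (q : T -> pred T) :
  (forall x, p x -> exists2 t, t \in ts & q t x) ->
  (count p s <= \sum_(t <- ts) count (q t) s)%N.
Proof.
move=> pq; elim: s => [|x s IH] /=; first by rewrite big1.
rewrite (eq_bigr (fun t => q t x + count (q t) s)%N) // big_split /= leq_add //.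
case: (boolP (p x)) => // /pq [t tts qtx].
by rewrite (big_rem t) //= qtx leq_addr.
Qed.

Section Counting.
Variables (K : fieldType) (V : lmodType K) (S : V -> Prop).
Implicit Types (L : V -> Prop) (s : seq V).

Definition enum_in L s := uniq s /\ forall x, x \in s <-> L x /\ S x.

(* A junk value unless L and S meet in a finite set. *)
Definition count_in L := size (xget [::] (enum_in L)).

Lemma count_in_ext L L' : (forall v, L v <-> L' v) -> count_in L = count_in L'.
Proof. by move=> LL'; congr count_in; apply/funext => v; apply/propext. Qed.

Lemma count_in0 L : (forall v, ~ L v) -> count_in L = 0%N.
Proof.
move=> L0; rewrite /count_in; case: xgetP => [[|x s] _ [_ sL]|] //.
by have [/L0] := (sL x).1 (mem_head _ _).
Qed.

Variable E : seq V.
Hypothesis S_span : forall x, S x -> seq_span E x.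

Lemma size_enum_le L s : lin_indep L -> uniq s ->
  (forall x, x \in s -> L x /\ S x) -> (size s <= size E)%N.
Proof.
move=> hL us sLS; apply: size_seq_free_le (lin_indep_seq_free us _) _.
  by apply: lin_indep_sub hL => x /sLS[].
by move=> x /sLS[_ /S_span].
Qed.

Lemma count_inP L : lin_indep L -> enum_in L (xget [::] (enum_in L)).
Proof.
move=> hL; apply: xgetPex.
pose ok m := `[< exists s, [/\ size s = m, uniq s & forall x, x \in s -> L x /\ S x] >].
have ok0 : exists m, ok m by exists 0%N; apply/asboolP; exists [::].
have ok_le m : ok m -> (m <= size E)%N.
  by move=> /asboolP [s [<- us sLS]]; exact: size_enum_le hL us sLS.
case: (ex_maxnP ok0 ok_le) => m /asboolP [s [szs us sLS]] smax.
exists s; split => // x; split => [/sLS//|LSx]; apply: contraT => xs.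
have /smax : ok (size (x :: s)).
  apply/asboolP; exists (x :: s); split => //=; first by rewrite xs.
  by move=> y; rewrite inE => /predU1P[->|/sLS].
by rewrite /= szs ltnn.
Qed.

Lemma count_in_eq L s : lin_indep L -> enum_in L s -> count_in L = size s.
Proof.
move=> hL [us sLS]; have [ue eLS] := count_inP hL.
by apply/perm_size/uniq_perm => // x; apply/idP/idP => [/eLS/sLS|/sLS/eLS].
Qed.

Lemma count_in_ge L s : lin_indep L -> uniq s ->
  (forall x, x \in s -> L x /\ S x) -> (size s <= count_in L)%N.
Proof.
by move=> hL us sLS; have [ue eLS] := count_inP hL; apply: uniq_leq_size => // x /sLS/eLS.
Qed.

Lemma count_in_le L : lin_indep L -> (count_in L <= size E)%N.
Proof. by move=> hL; have [ue eLS] := count_inP hL; apply: size_enum_le hL ue _ => x /eLS. Qed.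

Lemma count_in_union A B : lin_indep (set_union A B) -> (forall v, ~ (A v /\ B v)) ->
  count_in (set_union A B) = (count_in A + count_in B)%N.
Proof.
move=> hAB dAB.
have [uA eA] := count_inP (lin_indep_sub (fun x Ax => or_introl Ax) hAB).
have [uB eB] := count_inP (lin_indep_sub (fun x Bx => or_intror Bx) hAB).
rewrite /count_in -size_cat; apply: count_in_eq => //; split.
  rewrite cat_uniq uA uB andbT /=; apply/hasPn => x /eB [Bx _].
  by apply/negP => /eA [Ax _]; exact: dAB (conj Ax Bx).
move=> x; rewrite mem_cat; split.
  by move=> /orP[/eA[]|/eB[]] ? ?; split => //; [left|right].
by move=> [[Ax|Bx] Sx]; apply/orP; [left; apply/eA|right; apply/eB].
Qed.

Lemma count_in_bigunion (I : finType) (P : I -> V -> Prop) L : lin_indep L ->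
  (forall v, L v <-> exists j, P j v) ->
  (forall j j', j != j' -> forall v, ~ (P j v /\ P j' v)) ->
  count_in L = (\sum_j count_in (P j))%N.
Proof.
move=> hL LP dP; rewrite -big_enum /=.
have count_seq (r : seq I) : uniq r ->
    count_in (fun v => exists2 j, j \in r & P j v) = (\sum_(j <- r) count_in (P j))%N.
  elim: r => [_|j r IH /andP[jr ur]].
    by rewrite big_nil count_in0 // => v [].
  rewrite big_cons -IH // -count_in_union.
  - apply: count_in_ext => v; split => [[i]|[Pj|[i ir Pi]]]; last 2 first.
    + by exists j; rewrite ?mem_head.
    + by exists i; rewrite // inE ir orbT.
    by rewrite inE => /predU1P[->|ir] Pi; [left | right; exists i].
  - by apply: lin_indep_sub hL => v [Pj|[i _ Pi]]; apply/LP; [exists j | exists i].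
  - move=> v [Pj [i ir Pi]]; apply: (dP j i _ v (conj Pj Pi)).
    by apply: contraNneq jr => ->.
rewrite -count_seq ?enum_uniq //; apply: count_in_ext => v.
by rewrite LP; split => [[j Pj]|[j _ Pj]]; exists j; rewrite ?mem_enum.
Qed.

End Counting.

Section UltraLimit.
Variable R : realType.

Definition unit_valued (x : nat -> R) := forall k, 0 <= x k <= 1.

Variable U : set_system nat.
Hypotheses (U_ultra : UltraFilter U) (U_cofinite : \oo `<=` U).

Let U_proper : ProperFilter U. Proof. exact: ultra_proper. Qed.

Lemma ultra_cvg_unit_valued x : unit_valued x -> exists2 p : R, 0 <= p <= 1 & x @ U --> p.
Proof.
move=> x01.
have xU01 : (x @ U) `[0, 1] by apply: (@filterE _ U) => k /=; rewrite in_itv /= x01.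
have [p [p01 clp]] := @segment_compact R 0 1 _ _ xU01.
exists p; first by move: p01; rewrite /= in_itv.
move=> N Np; have [//|UNc] := in_ultra_setVsetC (x @^-1` N) U_ultra.
by have [z [/= nNz Nz]] := clp (~` N) _ UNc Np.
Qed.

Lemma ultra_lim_unit_valued x : unit_valued x -> x @ U --> lim (x @ U).
Proof. by move=> /ultra_cvg_unit_valued [p _ xp]; rewrite (cvg_lim _ xp). Qed.

Lemma ultra_lim_eq0 (u : nat -> R) : u @ \oo --> 0 -> lim (u @ U) = 0.
Proof. by move=> u0; apply: cvg_lim => // N /u0; exact: U_cofinite. Qed.

End UltraLimit.

Lemma ultralimit_exists (R : realType) : exists L : (nat -> R) -> R,
  [/\ forall x, unit_valued x -> 0 <= L x <= 1,
      L (fun=> 1) = 1,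
      forall x y, unit_valued x -> unit_valued y -> L (x \+ y) = L x + L y &
      forall x y, unit_valued x -> unit_valued y ->
        (fun k => x k - y k) @ \oo --> 0 -> L x = L y].
Proof.
have [U [U_ultra U_cofinite]] :=
  ultraFilterLemma (@eventually_filter : ProperFilter (\oo : set_system nat)).
have U_proper : ProperFilter U by exact: ultra_proper.
have cvgU := ultra_lim_unit_valued U_ultra.
exists (fun x => lim (x @ U)); split.
- move=> x x01; have [p p01 xp] := ultra_cvg_unit_valued U_ultra x01.
  by rewrite (cvg_lim _ xp).
- exact: lim_cst.
- by move=> x y /cvgU xU /cvgU yU; apply: cvg_lim => //; exact: cvgD.
move=> x y /cvgU xU /cvgU yU xy0; apply/eqP; rewrite -subr_eq0; apply/eqP.
rewrite -(ultra_lim_eq0 U_ultra U_cofinite xy0); apply/esym/cvg_lim => //; exact: cvgB.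
Qed.

Lemma cvg0_harmonic_bound (R : realType) (u : nat -> R) (Q : R) :
  (\forall k \near \oo, `|u k| <= Q * harmonic k) -> u @ \oo --> 0.
Proof.
move=> uQ; have Qh : (fun k => Q * harmonic k) @ \oo --> (0 : R).
  by rewrite -(mulr0 Q); apply: cvgM; [exact: cvg_cst | exact: cvg_harmonic].
have NQh : (fun k => - (Q * harmonic k)) @ \oo --> (0 : R) by rewrite -oppr0; exact: cvgN.
by apply: (squeeze_cvgr _ NQh Qh); apply: filterS uQ => k; rewrite -ler_norml.
Qed.

Lemma ratio_dist_le_harmonic (R : realType) (a b B Q D k : nat) : (0 < D)%N ->
  (a <= b + B)%N -> (b <= a + B)%N -> (k.+1 * B <= Q * D)%N ->
  `|a%:R / D%:R - b%:R / D%:R| <= Q%:R * harmonic k :> R.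
Proof.
move=> D0 ab ba BQ; have Dp : 0 < D%:R :> R by rewrite ltr0n.
rewrite -mulrBl normrM normfV normr_nat ler_pdivrMr //= mulrAC.
rewrite ler_pdivlMr ?ltr0n //; apply: le_trans (_ : B%:R * k.+1%:R <= _).
  apply: ler_wpM2r => //; rewrite ler_norml.
  move: ab ba; rewrite -!(ler_nat R) !natrD => ab ba; apply/andP; split; lra.
by rewrite -!natrM ler_nat mulnC.
Qed.

Section Construction.
Variables (K : fieldType) (V : lmodType K) (mul : V -> V -> V).
Hypothesis hmul : is_assoc_alg_mul mul.
Variable W : nat -> V -> Prop.
Hypotheses (W_incr : forall n v, W n v -> W n.+1 v) (W_exhaust : forall v, exists n, W n v).
Variable bW : nat -> seq V.
Hypotheses (bW_free : forall n, seq_free (bW n))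
  (bW_span : forall n v, W n v <-> seq_span (bW n) v).
(* [bWr r n] spans W_n r + W_n, and [folner] is the Folner condition
   dim (W_n r + W_n) / dim W_n -> 1 in integer form. *)
Variable bWr : V -> nat -> seq V.
Hypothesis bWr_span : forall r n v, transl_sum mul (W n) r v -> seq_span (bWr r n) v.
Hypothesis folner : forall r M, (0 < M)%N ->
  \forall n \near \oo, (M * (size (bWr r n) - size (bW n)) < size (bW n))%N.

Lemma W_mono n m v : (n <= m)%N -> W n v -> W m v.
Proof. by move=> /subnK <-; elim: (m - n)%N => // j IH /IH /W_incr. Qed.

Lemma near_W v : \forall n \near \oo, W n v.
Proof. by have [m Wm] := W_exhaust v; exists m => // n /= mn; exact: W_mono mn Wm. Qed.

Lemma is_subspace_W n : is_subspace (W n).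
Proof. exact: is_subspace_span_eq (bW_span n). Qed.

Definition tests k := flatten [seq bW i | i <- iota 0 k.+1].

Lemma tests_mono k k' t : (k <= k')%N -> t \in tests k -> t \in tests k'.
Proof.
move=> kk' /flattenP [_ /mapP [i + ->] tb]; rewrite mem_iota /= => ik.
apply/flattenP; exists (bW i) => //; apply/mapP; exists i => //.
by rewrite mem_iota /= (leq_trans ik) // ltnS.
Qed.

Lemma near_tests_span v : \forall k \near \oo, seq_span (tests k) v.
Proof.
apply: filterS (near_W v) => k /bW_span Wk.
apply: seq_span_min (is_subspace_seq_span _) _ Wk => x xb; apply: seq_span_mem.
apply/flattenP; exists (bW k) => //; apply/mapP; exists k => //.
by rewrite mem_iota leq0n add0n ltnSn.
Qed.

Definition escape n s (E : seq V) := count (fun x => ~~ `[< W n (mul x s) >]) E.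

Lemma escape_sub n s (T E : seq V) : seq_span T s ->
  (escape n s E <= \sum_(t <- T) escape n t E)%N.
Proof.
move=> [a ->]; apply: count_le_sum => x /= /asboolPn Wxs; apply: contrapT => Wxt.
apply: Wxs; rewrite amul_sumr // big_mkord; apply: is_subspace_sum (is_subspace_W n) _ => i _.
rewrite amulZr //; case: (is_subspace_W n) => _ _ WZ; apply: WZ; apply: contrapT => Wxi.
by apply: Wxt; exists T`_i; [exact: mem_nth | exact/asboolPn].
Qed.

Definition tower_stage k n E := [/\ seq_free E, forall v, W n v <-> seq_span E v,
  (0 < size E)%N, (k <= n)%N &
  forall t, t \in tests k -> (k.+1 * escape n t E <= size E)%N].

Lemma good_level n (E T : seq V) M : (0 < M)%N -> exists n', [/\ (n < n')%N, (0 < size (bW n'))%N,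
  forall x, x \in E -> forall t, t \in T -> W n' (mul x t) &
  forall t, t \in T -> (M * (size (bWr t n') - size (bW n')) < size (bW n'))%N].
Proof.
move=> M0; have pos : \forall n' \near \oo, (0 < size (bW n'))%N.
  by apply: filterS (folner 0 (ltn0Sn 0)) => n'; rewrite mul1n; exact: leq_ltn_trans.
have ET : \forall n' \near \oo, forall x, x \in E -> forall t, t \in T -> W n' (mul x t).
  by apply: near_all_in => x _; apply: near_all_in => t _; exact: near_W.
have TM := near_all_in (fun t (_ : t \in T) => folner t M0).
have [n' [nn' [bW0 [ETn' TMn']]]] :=
  filter_ex (filterI (nbhs_infty_gt n) (filterI pos (filterI ET TM))).
by exists n'.
Qed.

Lemma tower_stage0 : exists n E, tower_stage 0 n E.
Proof.
have [n [_ bW0 _ _]] := good_level 0 [::] [::] (ltn0Sn 0).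
by exists n, (bW n); split => // t _; rewrite mul1n count_size.
Qed.

Lemma tower_stage_step k n E : tower_stage k n E -> exists n' c, tower_stage k.+1 n' (E ++ c).
Proof.
case=> hE EW _ kn _; set T := tests k.+1.
(* M = (k + 2) (|T| + 1) makes the |T| codimension defects add up to at most
   |bW n'| / (k + 2). *)
have [n' [nn' bW0 ET TM]] := good_level n E T (muln_gt0 k.+2 (size T).+1).
have ET' x : x \in E -> rstab mul (W n') T x.
  by move=> xE; split; [apply: W_mono (ltnW nn') _; exact/EW/seq_span_mem | exact: ET].
have [c [cW hEc Wc esc]] := rstab_free_extend hmul (@bW_free n') (bW_span n')
  (fun t _ v => @bWr_span t n' v) hE ET'.
have Ec_span v : W n' v <-> seq_span (E ++ c) v.
  split=> [/Wc//|]; apply: seq_span_min (is_subspace_W n') _ => x.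
  by rewrite mem_cat => /orP[/ET'[]|/cW].
have szEc : size (E ++ c) = size (bW n').
  by apply: seq_free_span_size hEc (@bW_free n') _ => v; rewrite -Ec_span bW_span.
exists n', c; split => //; rewrite ?szEc //; first lia.
move=> t tT.
apply: leq_trans _ (mul_sum_le_shares (f := fun t => (size (bWr t n') - size (bW n'))%N) TM).
rewrite leq_mul2l; apply/orP; right; apply: leq_trans esc.
by apply: sub_count => x /=; apply: contra => /asboolP [_ xT]; apply/asboolP; exact: xT.
Qed.

Lemma tower_exists : exists (n : nat -> nat) (E : nat -> seq V), forall k,
  tower_stage k (n k) (E k) /\ exists c, E k.+1 = E k ++ c.
Proof.
have [n0 [E0 h0]] := tower_stage0.
have /choice[f hf] (p : nat * (nat * seq V)) : exists q : nat * seq V,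
    tower_stage p.1 p.2.1 p.2.2 -> tower_stage p.1.+1 q.1 q.2 /\ exists c, q.2 = p.2.2 ++ c.
  case: (pselect (tower_stage p.1 p.2.1 p.2.2)) => [/tower_stage_step[n' [c hc]]|np].
    by exists (n', p.2.2 ++ c) => _; split => //; exists c.
  by exists p.2 => /np.
pose st := fix st k := if k is k'.+1 then f (k', st k') else (n0, E0).
have st_stage k : tower_stage k (st k).1 (st k).2.
  by elim: k => [|k IH] //=; case: (hf (k, st k) IH).
exists (fun k => (st k).1), (fun k => (st k).2) => k; split => //.
by case: (hf (k, st k) (st_stage k)).
Qed.

Section Tower.
Hypothesis hdom : forall a b, mul a b = 0 -> a = 0 \/ b = 0.
Variables (lev : nat -> nat) (E : nat -> seq V).
Hypothesis tower : forall k, tower_stage k (lev k) (E k) /\ exists c, E k.+1 = E k ++ c.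

Lemma E_free k : seq_free (E k). Proof. by have [[]] := tower k. Qed.
Lemma E_span k v : W (lev k) v <-> seq_span (E k) v. Proof. by have [[]] := tower k. Qed.
Lemma E_pos k : (0 < size (E k))%N. Proof. by have [[]] := tower k. Qed.
Lemma lev_ge k : (k <= lev k)%N. Proof. by have [[]] := tower k. Qed.
Lemma E_escape k t : t \in tests k -> (k.+1 * escape (lev k) t (E k) <= size (E k))%N.
Proof. by have [[_ _ _ _ Eesc] _] := tower k; exact: Eesc. Qed.

Lemma E_prefix k k' : (k <= k')%N -> exists c, E k' = E k ++ c.
Proof.
move=> /subnK <-; elim: (k' - k)%N => [|j [c IH]]; first by exists [::]; rewrite cats0.
by have [_ [c' ->]] := tower (j + k); rewrite IH -catA; exists (c ++ c').
Qed.

Lemma E_mono k k' x : (k <= k')%N -> x \in E k -> x \in E k'.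
Proof. by move=> /E_prefix [c ->] xE; rewrite mem_cat xE. Qed.

Definition tower_basis v := exists k, v \in E k.

Lemma tower_basis_W k v : tower_basis v -> W (lev k) v -> v \in E k.
Proof.
move=> [k' vk'] Wv; case: (leqP k' k) => [k'k|kk']; first exact: E_mono vk'.
have [c Ec] := E_prefix (ltnW kk'); move: vk'; rewrite Ec mem_cat => /orP[//|vc].
by have := @E_free k'; rewrite Ec => /seq_free_cat_span/(_ vc) []; apply/E_span.
Qed.

Lemma tower_basis_common (l : seq V) : (forall x, x \in l -> tower_basis x) ->
  exists k, forall x, x \in l -> x \in E k.
Proof.
move=> lE; have /filter_ex[k hk] : \forall k \near \oo, forall x, x \in l -> x \in E k.
  apply: near_all_in => x /lE [k xk]; exists k => // k' /= kk'; exact: E_mono xk.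
by exists k.
Qed.

Lemma is_basis_tower : is_basis tower_basis.
Proof.
split=> [l c ul lE c0 x xl|v].
  have [k lk] := tower_basis_common lE.
  exact: seq_free_lin_indep (@E_free k) l c ul lk c0 x xl.
have [m Wm] := W_exhaust v.
have [l [c [lE ->]]] := seq_span_in_span (seq_free_uniq (@E_free m))
  ((E_span m v).1 (W_mono (lev_ge m) Wm)).
by exists l, c; split => // x /lE; exists m.
Qed.

Lemma tower_basis_indep : lin_indep tower_basis.
Proof. by case: is_basis_tower. Qed.

Let E_sub k x : W (lev k) x -> seq_span (E k) x := (E_span k x).1.

Local Notation tcount k := (count_in (W (lev k))).

Lemma tcount_basis k : tcount k tower_basis = size (E k).
Proof.
rewrite (count_in_eq (@E_sub k) tower_basis_indep (s := E k)) //.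
split; first exact/seq_free_uniq/E_free.
move=> x; split=> [xE|[xE /(tower_basis_W xE)//]].
by split; [exists k | exact/E_span/seq_span_mem].
Qed.

Lemma rmul_inj s : s != 0 -> forall a b, mul a s = mul b s -> a = b.
Proof.
move=> s0 a b ab; apply/eqP; rewrite -subr_eq0; apply/eqP.
have /hdom[//|/eqP] : mul (a - b) s = 0 by rewrite amulBl // ab subrr.
by rewrite (negbTE s0).
Qed.

Lemma lin_indep_rmul L s : s != 0 -> lin_indep L -> lin_indep (rmul_set mul L s).
Proof.
move=> s0 hL l c ul lLs c0 x xl.
have /choice[f hf] y : exists a, rmul_set mul L s y -> L a /\ y = mul a s.
  by case: (pselect (rmul_set mul L s y)) => [[a ha]|nLy]; [exists a | exists 0].
have fE y : y \in l -> y = mul (f y) s by move=> /lLs /hf[].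
have uf : uniq (map f l).
  by rewrite map_inj_in_uniq // => y z yl zl fyz; rewrite (fE y) // (fE z) // fyz.
have fc0 : \sum_(a <- map f l) c (mul a s) *: a = 0.
  apply: (rmul_inj s0); rewrite amul_suml // amul0l // big_map -[RHS]c0 big_seq [RHS]big_seq.
  by apply: eq_bigr => y yl; rewrite amulZl // -fE.
have := hL _ _ uf _ fc0 (f x) (map_f f xl); rewrite -fE //; apply.
by move=> a /mapP[y /lLs /hf[]] La _ ->.
Qed.

Lemma tcount_le_rmul k A s : s != 0 -> (forall v, A v -> tower_basis v) ->
  (tcount k A <= tcount k (rmul_set mul A s) + escape (lev k) s (E k))%N.
Proof.
move=> s0 AE; have hA := lin_indep_sub AE tower_basis_indep.
have [uA eA] := count_inP (@E_sub k) hA; set sA := xget _ _ in uA eA.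
pose good x := `[< W (lev k) (mul x s) >].
have -> : tcount k A = size sA by [].
rewrite -(count_predC good) leq_add //.
  rewrite -size_filter -(size_map (mul^~ s)); apply: (count_in_ge (@E_sub k)).
  - exact: lin_indep_rmul.
  - by rewrite map_inj_in_uniq ?filter_uniq // => x y _ _; exact: rmul_inj.
  move=> y /mapP[x + ->]; rewrite mem_filter => /andP[/asboolP Wxs /eA[Ax _]].
  by split => //; exists x.
rewrite /escape -!size_filter; apply: uniq_leq_size; first exact: filter_uniq.
move=> x; rewrite !mem_filter => /andP[nx /eA[Ax Wx]].
by rewrite (tower_basis_W (AE x Ax) Wx) andbT.
Qed.

Lemma tcount_rmul_le k A s : s != 0 -> (forall v, A v -> tower_basis v) ->
  (tcount k (rmul_set mul A s) <= tcount k A + escape (lev k) s (E k))%N.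
Proof.
(* With B the rest of the basis, c(A s) + c(B s) <= |E_k| = c(A) + c(B) and
   c(B) <= c(B s) + escape. *)
move=> s0 AE; pose B v := tower_basis v /\ ~ A v.
have BE v : B v -> tower_basis v by case.
have indepAB : lin_indep (set_union A B).
  by apply: lin_indep_sub tower_basis_indep => v [/AE|/BE].
have indepABs : lin_indep (set_union (rmul_set mul A s) (rmul_set mul B s)).
  apply: lin_indep_sub (lin_indep_rmul s0 indepAB) => v [] [a [? ->]].
    by exists a; split => //; left.
  by exists a; split => //; right.
have basisE : tcount k tower_basis = (tcount k A + tcount k B)%N.
  have disjAB v : ~ (A v /\ B v) by move=> [Av [_ nAv]].
  rewrite -(count_in_union (@E_sub k)) //.
  apply: count_in_ext => v; split=> [Ev|[/AE|/BE]//].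
  by case: (pselect (A v)) => Av; [left | right].
have disjABs v : ~ (rmul_set mul A s v /\ rmul_set mul B s v).
  by move=> [[a [Aa ->]] [b [[_ nAb] /(rmul_inj s0) ab]]]; apply: nAb; rewrite -ab.
have := count_in_le (@E_sub k) indepABs; have := tcount_le_rmul k s0 BE.
by rewrite (count_in_union (@E_sub k)) // -(tcount_basis k) basisE; lia.
Qed.

Lemma tcount_rmul_close k B s r : (forall v, B v -> tower_basis v) ->
  lin_indep (rmul_set mul B s) -> r != 0 ->
  let e := (escape (lev k) s (E k) + escape (lev k) (mul s r) (E k))%N in
  (tcount k (rmul_set mul B (mul s r)) <= tcount k (rmul_set mul B s) + e)%N /\
  (tcount k (rmul_set mul B s) <= tcount k (rmul_set mul B (mul s r)) + e)%N.
Proof.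
move=> BE hBs r0 e; case: (eqVneq s 0) => [s0|s0].
  have B0 v : ~ B v by move=> Bv; apply: (lin_indep_neq0 hBs); exists v; rewrite s0 amul0r.
  by rewrite !count_in0 // => v [a [/B0]].
have sr0 : mul s r != 0.
  by apply/eqP => /hdom[]/eqP; rewrite ?(negbTE s0) ?(negbTE r0).
have := tcount_le_rmul k s0 BE; have := tcount_rmul_le k s0 BE.
have := tcount_le_rmul k sr0 BE; have := tcount_rmul_le k sr0 BE.
rewrite /e; lia.
Qed.

Lemma escape_span_small k0 k s : (k0 <= k)%N -> seq_span (tests k0) s ->
  (k.+1 * escape (lev k) s (E k) <= size (tests k0) * size (E k))%N.
Proof.
move=> k0k /(escape_sub (lev k) (E k)) esc; apply: leq_trans (leq_mul (leqnn _) esc) _.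
rewrite big_distrr /=; apply: (@leq_trans (\sum_(t <- tests k0) size (E k))).
  rewrite big_seq_cond [X in (_ <= X)%N]big_seq_cond; apply: leq_sum => t /andP[tk0 _].
  exact/E_escape/(tests_mono k0k).
by rewrite big_const_seq count_predT iter_addn_0 mulnC.
Qed.

Lemma escape_small (I : finType) (f : I -> V) : exists Q, \forall k \near \oo,
  (k.+1 * \sum_i escape (lev k) (f i) (E k) <= Q * size (E k))%N.
Proof.
have [k0 k0f] := filter_ex (filter_forall _ (fun i => near_tests_span (f i))).
exists (#|I| * size (tests k0))%N; apply: filterS (nbhs_infty_ge k0) => k /= k0k.
rewrite big_distrr /= -mulnA -sum_nat_const; apply: leq_sum => i _.
exact: escape_span_small (k0f i).
Qed.

Lemma regular_tcount_rmul A r : regular mul tower_basis A -> r != 0 ->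
  exists2 B : nat -> nat,
    forall k, (tcount k (rmul_set mul A r) <= tcount k A + B k)%N /\
              (tcount k A <= tcount k (rmul_set mul A r) + B k)%N &
    exists Q, \forall k \near \oo, (k.+1 * B k <= Q * size (E k))%N.
Proof.
move=> [hA [n [Aj [rj [AjE Adec Adisj]]]]] r0.
have hAj j : lin_indep (rmul_set mul (Aj j) (rj j)).
  by apply: lin_indep_sub hA => v Ajv; apply/Adec; exists j.
have cA k : tcount k A = (\sum_j tcount k (rmul_set mul (Aj j) (rj j)))%N.
  exact: (count_in_bigunion (@E_sub k) (P := fun j => rmul_set mul (Aj j) (rj j)) hA).
have cAr k : tcount k (rmul_set mul A r) =
    (\sum_j tcount k (rmul_set mul (Aj j) (mul (rj j) r)))%N.
  apply: (count_in_bigunion (@E_sub k) (P := fun j => rmul_set mul (Aj j) (mul (rj j) r)))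
    (lin_indep_rmul r0 hA) _ _ => [v|j j' jj' v].
    split=> [[_ [/Adec[j [b [Ab ->]]] ->]]|[j [b [Ab ->]]]].
      by exists j, b; rewrite amulA.
    by exists (mul b (rj j)); split; [apply/Adec; exists j, b | rewrite amulA].
  move=> [[b [Ab ->]] [b' [Ab' /esym]]]; rewrite !amulA // => /(rmul_inj r0) bb'.
  by apply: (Adisj j j' jj' (mul b (rj j))); split; [exists b | exists b'].
pose g i := match i with inl j => rj j | inr j => mul (rj j) r end.
exists (fun k => \sum_(i : 'I_n + 'I_n) escape (lev k) (g i) (E k))%N; last exact: escape_small.
move=> k; rewrite cA cAr big_sumType /= -big_split.
by split; rewrite -big_split; apply: leq_sum => j _; case: (tcount_rmul_close k (AjE j) (hAj j) r0).
Qed.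

Lemma tower_measure_exists : exists mu, dim_measure mul tower_basis mu.
Proof.
have [Lim [Lim01 Lim1 LimD Lim_near]] := ultralimit_exists Rdefinitions.R.
pose ratio L k : Rdefinitions.R := (tcount k L)%:R / (size (E k))%:R.
have E0 k : 0 < (size (E k))%:R :> Rdefinitions.R by rewrite ltr0n E_pos.
have ratio01 L : lin_indep L -> unit_valued (ratio L).
  move=> hL k; rewrite divr_ge0 ?ler0n //= ler_pdivrMr // mul1r ler_nat.
  by apply: (count_in_le (@E_sub k)).
exists (fun L => Lim (ratio L)); split.
- rewrite (_ : ratio tower_basis = fun=> 1) //; apply/funext => k.
  by rewrite /ratio tcount_basis divff // gt_eqF.
- by move=> A [hA _]; apply/andP; exact: Lim01 (ratio01 A hA).
- move=> A B [hA _] [hB _] [dAB hAB].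
  rewrite -(LimD _ _ (ratio01 A hA) (ratio01 B hB)); congr Lim; apply/funext => k.
  by rewrite /ratio (count_in_union (@E_sub k)) // natrD mulrDl.
move=> A r /[dup] regA [hA _] r0; have hAr := lin_indep_rmul r0 hA.
apply: Lim_near (ratio01 _ hAr) (ratio01 _ hA) _.
have [B AB [Q BQ]] := regular_tcount_rmul regA r0.
apply: (cvg0_harmonic_bound (Q := Q%:R)); apply: filterS BQ => k BQk.
by have [ABk BAk] := AB k; apply: ratio_dist_le_harmonic BQk; rewrite ?E_pos.
Qed.

End Tower.
End Construction.

Lemma has_dim_seq_free (K : fieldType) (V : lmodType K) (S : V -> Prop) d : has_dim S d ->
  exists l, [/\ seq_free l, size l = d & forall v, S v <-> seq_span l v].
Proof.
move=> [l [ul sl li Sl]]; exists l; split => //; first exact: lin_indep_seq_free.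
by move=> v; split=> [/Sl/in_span_seq_span|/(seq_span_in_span ul)/Sl].
Qed.

Lemma ratio_near1_bound (d e M : nat) : (0 < M)%N ->
  `|(e%:R / d%:R : rat) - 1| < M%:R^-1 -> (M * (e - d) < d)%N.
Proof.
move=> M0 edM; have Mp : 0 < M%:R :> rat by rewrite ltr0n.
have d0 : (0 < d)%N.
  rewrite lt0n; apply: contraTneq edM => ->.
  by rewrite invr0 mulr0 sub0r normrN normr1 -leNgt invf_le1 // ler1n.
case: (leqP e d) => [|de]; first by rewrite -subn_eq0 => /eqP->; rewrite muln0.
rewrite -(ltr_nat rat) natrM natrB 1?ltnW // -[X in _ < X]mul1r.
have dp : 0 < d%:R :> rat by rewrite ltr0n.
have -> : e%:R - d%:R = (e%:R / d%:R - 1) * d%:R :> rat by rewrite mulrBl divfK ?mul1r ?gt_eqF.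
rewrite mulrA ltr_pM2r // mulrC -ltr_pdivlMr // mul1r.
exact: le_lt_trans (ler_norm _) edM.
Qed.

Lemma amenable_folner_bases (K : fieldType) (V : lmodType K) (mul : V -> V -> V) :
  amenable mul -> exists W (bW : nat -> seq V) (bWr : V -> nat -> seq V),
  [/\ forall n v, W n v -> W n.+1 v, forall v, exists n, W n v,
      forall n, seq_free (bW n) /\ forall v, W n v <-> seq_span (bW n) v,
      forall r n v, transl_sum mul (W n) r v -> seq_span (bWr r n) v &
      forall r M, (0 < M)%N ->
        \forall n \near \oo, (M * (size (bWr r n) - size (bW n)) < size (bW n))%N].
Proof.
move=> [W [W_incr W_exhaust Wr]].
have /choice[bW bWP] n : exists l, seq_free l /\ forall v, W n v <-> seq_span l v.
  by have [d [_ [dimW _ _]]] := Wr 0; have [l [hl _ Wl]] := has_dim_seq_free (dimW n); exists l.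
have /choice[bWr bWrP] r : exists f : nat -> seq V,
    (forall n v, transl_sum mul (W n) r v -> seq_span (f n) v) /\
    forall M, (0 < M)%N ->
      \forall n \near \oo, (M * (size (f n) - size (bW n)) < size (bW n))%N.
  have [d [e [dimW dimWr de1]]] := Wr r.
  have /choice[f fP] n := has_dim_seq_free (dimWr n).
  exists f; split=> [n v|M M0]; first by have [_ _ /(_ v)[]] := fP n.
  have Minv0 : 0 < M%:R^-1 :> rat by rewrite invr_gt0 ltr0n.
  have [N NM] := de1 _ Minv0.
  exists N => // n /= Nn; have [hl sl Wl] := fP n.
  have [l [hl' sl' Wl']] := has_dim_seq_free (dimW n).
  have -> : size (bW n) = d n.
    rewrite -sl'; apply: seq_free_span_size (bWP n).1 hl' _ => v.
    by rewrite -(bWP n).2 Wl'.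
  by rewrite sl; exact: ratio_near1_bound M0 (NM n Nn).
by exists W, bW, bWr; split => // r; [exact: (bWrP r).1 | exact: (bWrP r).2].
Qed.

Unset Implicit Arguments.

Theorem proposition1 (K : fieldType) (V : lmodType K) (mul : V -> V -> V) :
  is_assoc_alg_mul mul -> affine_alg mul -> amenable mul ->
  no_zero_divisors mul ->
  exists (E : V -> Prop) (mu : (V -> Prop) -> Rdefinitions.R),
    is_basis E /\ dim_measure mul E mu.
Proof.
move=> hmul _ /amenable_folner_bases[W [bW [bWr [W_incr W_exhaust bWP bWr_span folner]]]] [_ hdom].
have bW_free n := (bWP n).1; have bW_span n := (bWP n).2.
have [lev [E tower]] := tower_exists hmul W_incr W_exhaust bW_free bW_span bWr_span folner.
have [mu hmu] := tower_measure_exists hmul W_incr W_exhaust bW_span hdom tower.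
by exists (tower_basis E), mu; split; first exact: (is_basis_tower W_incr W_exhaust tower).
Qed.
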